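(* Let $A$ and $B$ be self-adjoint operators on the same complex Hilbert space, with $B$ bounded and non-negative. Then the following are equivalent: (i) $0 \in \rho(A+tB)$ for every $t\in\mathbb{R}$; (ii) $0\in\rho(A)$ and $BA^{-1}B=0$. Moreover, in this case $0\in\rho(A+zB)$ for all $z \in \mathbb{C}$, and $$(A+zB)^{-1} = A^{-1} - zA^{-1}BA^{-1}.$$
   Context: $\rho(T)$ denotes the resolvent set of an operator $T$. $A$ may be unbounded; $A+zB$ is defined on the domain of $A$. *)

From HB Require Import structures.
From mathcomp Require Import all_boot all_order all_algebra.
From mathcomp Require Import complex.
From mathcomp Require Import reals.
Set Implicit Arguments. Unset Strict Implicit. Unset Printing Implicit Defensive.
Import Order.TTheory GRing.Theory Num.Theory.
Local Open Scope ring_scope.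
Local Open Scope complex_scope.

Definition is_inner_product (R : realType) (V : lmodType R[i]) (ip : V -> V -> R[i]) : Prop :=
  [/\ (forall (a : R[i]) (x y z : V), ip (a *: x + y) z = a * ip x z + ip y z),
      (forall x y : V, ip y x = (ip x y)^*),
      (forall x : V, 0 <= ip x x) &
      (forall x : V, ip x x = 0 -> x = 0)].

Definition hnorm (R : realType) (V : lmodType R[i]) (ip : V -> V -> R[i]) (x : V) : R :=
  Num.sqrt (@complex.Re R (ip x x)).

Definition is_hilbert (R : realType) (V : lmodType R[i]) (ip : V -> V -> R[i]) : Prop :=
  is_inner_product ip /\
  forall u : nat -> V,
    (forall e : R, 0 < e -> exists N : nat, forall m n : nat, (N <= m)%N -> (N <= n)%N ->
        hnorm ip (u m - u n) < e) ->
    exists l : V, forall e : R, 0 < e -> exists N : nat, forall n : nat, (N <= n)%N ->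
        hnorm ip (u n - l) < e.

(* An (unbounded) linear operator A with domain D: D is a linear subspace,
   A is linear on D (values of A outside D are irrelevant). *)
Definition is_lin_op (R : realType) (V : lmodType R[i]) (D : V -> Prop) (A : V -> V) : Prop :=
  D 0 /\
  forall (a : R[i]) (x y : V), D x -> D y ->
    D (a *: x + y) /\ A (a *: x + y) = a *: A x + A y.

(* Self-adjoint operator (A, D): densely defined, and A equals its adjoint, i.e.
   A is symmetric on D and the adjoint domain is contained in D. *)
Definition self_adjoint (R : realType) (V : lmodType R[i]) (ip : V -> V -> R[i])
    (D : V -> Prop) (A : V -> V) : Prop :=
  [/\ is_lin_op D A,
      (forall (x : V) (e : R), 0 < e -> exists d : V, D d /\ hnorm ip (x - d) < e),
      (forall x y : V, D x -> D y -> ip (A x) y = ip x (A y)) &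
      (forall y : V, (exists z : V, forall x : V, D x -> ip (A x) y = ip x z) -> D y)].

Definition bounded_op (R : realType) (V : lmodType R[i]) (ip : V -> V -> R[i]) (B : V -> V) : Prop :=
  (forall (a : R[i]) (x y : V), B (a *: x + y) = a *: B x + B y) /\
  exists M : R, forall x : V, hnorm ip (B x) <= M * hnorm ip x.

Definition nonneg_op (R : realType) (V : lmodType R[i]) (ip : V -> V -> R[i]) (B : V -> V) : Prop :=
  forall x : V, 0 <= ip (B x) x.

Definition bounded_inverse (R : realType) (V : lmodType R[i]) (ip : V -> V -> R[i])
    (D : V -> Prop) (T : V -> V) (S : V -> V) : Prop :=
  [/\ (forall y : V, D (S y) /\ T (S y) = y),
      (forall x : V, D x -> S (T x) = x) &
      exists M : R, forall y : V, hnorm ip (S y) <= M * hnorm ip y].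

Definition zero_in_resolvent (R : realType) (V : lmodType R[i]) (ip : V -> V -> R[i])
    (D : V -> Prop) (T : V -> V) : Prop :=
  exists S : V -> V, bounded_inverse ip D T S.

(* Let S be the bounded inverse of A and P := B S B.  If P = 0, a direct
   computation shows that S - z S B S is a two-sided bounded inverse of A + z B.

   Conversely, consider the real quadratic forms qB x = Re <B x, x> >= 0 and
   qBSB x = Re <P x, x> = Re <S B x, B x>, so that |qBSB| <= |S| |B| qB.  If
   s qBSB took a positive value for some real s, let M > 0 be the supremum of
   s qBSB / qB.  Then H := B - (s/M) P is symmetric and non-negative, whence
   |H x|^2 <= c <H x, x>; since (A - (s/M) B) S B = H and A - (s/M) B has a
   bounded inverse, also |S B x|^2 <= c' <H x, x>, and Cauchy-Schwarz gives
   qBSB^2 <= C (qB - (s/M) qBSB) qB.  For r = s qBSB / qB this reads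
   r^2 <= K (M - r), which fails as r approaches M.  Hence qBSB = 0, and a
   symmetric operator with vanishing quadratic form is zero. *)

From HB Require Import structures.
From mathcomp Require Import all_boot all_order all_algebra.
From mathcomp Require Import complex classical_sets reals.
From mathcomp Require Import ring lra.
Set Implicit Arguments.
Unset Strict Implicit.
Unset Printing Implicit Defensive.
Import Order.TTheory GRing.Theory Num.Theory.
Local Open Scope ring_scope.
Local Open Scope complex_scope.
Local Open Scope classical_set_scope.

Lemma quad_ge0_discr_le (R : realFieldType) (a b c : R) : 0 <= c ->
  (forall s, 0 <= a + 2 * s * b + s ^+ 2 * c) -> b ^+ 2 <= a * c.
Proof.
move=> c_ge0 quad_ge0; have [c0|c_neq0] := eqVneq c 0.
  have [b0|b_neq0] := eqVneq b 0; first by rewrite b0 c0 expr2 !mulr0.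
  have := quad_ge0 (- (a + 1) / (2 * b)).
  have -> : 2 * (- (a + 1) / (2 * b)) * b = - (a + 1) by field; rewrite b_neq0.
  rewrite c0; lra.
have c_gt0 : 0 < c by rewrite lt_def c_neq0.
have := quad_ge0 (- b / c).
have -> : a + 2 * (- b / c) * b + (- b / c) ^+ 2 * c = a - b ^+ 2 / c by field.
by rewrite subr_ge0 ler_pdivrMr // mulrC.
Qed.

Lemma sup_le0_of_sqr_le_gap (R : realType) (E : set R) (K : R) :
  has_sup E -> 0 <= K -> (forall r, E r -> r ^+ 2 <= K * (sup E - r)) -> sup E <= 0.
Proof.
move=> supE K_ge0 gap; rewrite leNgt; apply/negP => M_gt0.
set M := sup E in M_gt0 gap *.
have d_gt0 : 0 < 4 * K + 2 * M by lra.
pose eps := M ^+ 2 / (4 * K + 2 * M).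
have eps_gt0 : 0 < eps by rewrite divr_gt0 // exprn_gt0.
have eps_le : eps <= M / 2.
  rewrite ler_pdivrMr // -subr_ge0.
  have -> : M / 2 * (4 * K + 2 * M) - M ^+ 2 = 2 * (M * K) by field.
  by rewrite mulr_ge0 // mulr_ge0 // ltW.
have K_eps : K * eps < M ^+ 2 / 4.
  rewrite mulrA ltr_pdivrMr // -subr_gt0.
  have -> : M ^+ 2 / 4 * (4 * K + 2 * M) - K * M ^+ 2 = M ^+ 3 / 2 by field.
  by rewrite divr_gt0 // exprn_gt0.
have [r Er r_gt] := sup_adherent eps_gt0 supE; rewrite -/M in r_gt.
have := gap r Er; nra.
Qed.

Lemma cauchy_schwarz_form (R : realType) (V : lmodType R[i]) (g : V -> V -> R) :
  (forall x y z, g (x + y) z = g x z + g y z) ->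
  (forall (s : R) x z, g (s%:C *: x) z = s * g x z) ->
  (forall x y, g x y = g y x) -> (forall x, 0 <= g x x) ->
  forall x y, g x y ^+ 2 <= g x x * g y y.
Proof.
move=> gDl gZl gC g_ge0 x y; apply: quad_ge0_discr_le (g_ge0 y) _ => s.
have gDr u v w : g w (u + v) = g w u + g w v by rewrite gC gDl ![g _ w]gC.
have gZr (r : R) u w : g w (r%:C *: u) = r * g w u by rewrite gC gZl gC.
have := g_ge0 (x + s%:C *: y).
rewrite gDl !gDr !gZl !gZr (gC y x).
suff -> : g x x + s * g x y + (s * g x y + s * (s * g y y)) =
          g x x + 2 * s * g x y + s ^+ 2 * g y y by [].
ring.
Qed.

Section InnerProduct.
Variables (R : realType) (V : lmodType R[i]) (ip : V -> V -> R[i]).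
Hypothesis ip_inner : is_inner_product ip.

Lemma ipDl x y z : ip (x + y) z = ip x z + ip y z.
Proof. by case: ip_inner => ipDZ _ _ _; have := ipDZ 1 x y z; rewrite scale1r mul1r. Qed.

Lemma ip0l z : ip 0 z = 0.
Proof. by apply/(addrI (ip 0 z)); rewrite -ipDl !addr0. Qed.

Lemma ipZl a x z : ip (a *: x) z = a * ip x z.
Proof. by case: ip_inner => ipDZ _ _ _; have := ipDZ a x 0 z; rewrite addr0 ip0l addr0. Qed.

Lemma ipC x y : ip y x = (ip x y)^*.
Proof. by case: ip_inner. Qed.

Lemma ipDr x y z : ip z (x + y) = ip z x + ip z y.
Proof. by rewrite (ipC x z) (ipC y z) (ipC (x + y) z) ipDl rmorphD. Qed.

Lemma ipZr_real (s : R) x z : ip z (s%:C *: x) = s%:C * ip z x.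
Proof. by rewrite (ipC x z) (ipC (s%:C *: x) z) ipZl; case: (ip x z) => a b; simpc. Qed.

Definition reip x y := complex.Re (ip x y).
Definition nsq x := reip x x.

Lemma reipDl x y z : reip (x + y) z = reip x z + reip y z.
Proof. by rewrite /reip ipDl; case: (ip x z) => a b; case: (ip y z). Qed.

Lemma reipZl (s : R) x z : reip (s%:C *: x) z = s * reip x z.
Proof. by rewrite /reip ipZl; case: (ip x z) => a b /=; simpc. Qed.

Lemma reipC x y : reip x y = reip y x.
Proof. by rewrite /reip (ipC x y); case: (ip x y). Qed.

Lemma reipDr x y z : reip z (x + y) = reip z x + reip z y.
Proof. by rewrite reipC reipDl ![reip _ z]reipC. Qed.

Lemma reipNl x z : reip (- x) z = - reip x z.
Proof. by apply/(addrI (reip x z)); rewrite -reipDl !subrr /reip ip0l. Qed.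

Lemma reipNr x z : reip z (- x) = - reip z x.
Proof. by rewrite reipC reipNl reipC. Qed.

Lemma reip_ge0 x y : 0 <= ip x y -> 0 <= reip x y.
Proof. by rewrite lecE => /andP[]. Qed.

Lemma ipxxE x : ip x x = (nsq x)%:C.
Proof.
case: ip_inner => _ _ ip_ge0 _; have := ip_ge0 x.
by rewrite lecE /nsq /reip; case: (ip x x) => a b /= /andP[/eqP-> _].
Qed.

Lemma nsq_ge0 x : 0 <= nsq x.
Proof. by case: ip_inner => _ _ ip_ge0 _; exact: reip_ge0. Qed.

Lemma nsq_eq0 x : nsq x = 0 -> x = 0.
Proof. by case: ip_inner => _ _ _ ip_eq0 nsq0; apply: ip_eq0; rewrite ipxxE nsq0. Qed.

Lemma nsqB x y : nsq (x - y) <= 2 * nsq x + 2 * nsq y.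
Proof.
have := nsq_ge0 (x + y).
rewrite /nsq !reipDl !reipDr !reipNl !reipNr (reipC y x); lra.
Qed.

Lemma nsqZ c x : nsq (c *: x) = (complex.Re c ^+ 2 + complex.Im c ^+ 2) * nsq x.
Proof.
rewrite /nsq /reip ipZl ipC ipZl ipxxE.
case: c => a b; simpc; rewrite /=; ring.
Qed.

Lemma hnormE x : hnorm ip x = Num.sqrt (nsq x).
Proof. by []. Qed.

Lemma nsq_bounded (f : V -> V) M : (forall x, hnorm ip (f x) <= M * hnorm ip x) ->
  forall x, nsq (f x) <= `|M| ^+ 2 * nsq x.
Proof.
move=> f_bound x; have := f_bound x; rewrite !hnormE => le_fx.
have le_fx' : Num.sqrt (nsq (f x)) <= `|M| * Num.sqrt (nsq x).
  by apply: le_trans le_fx _; rewrite ler_wpM2r ?sqrtr_ge0 ?ler_norm.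
rewrite -(sqr_sqrtr (nsq_ge0 x)) -(sqr_sqrtr (nsq_ge0 (f x))) -exprMn.
by rewrite ler_pXn2r // nnegrE ?sqrtr_ge0 // (le_trans (sqrtr_ge0 _) le_fx').
Qed.

Lemma hnorm_bounded (f : V -> V) C : 0 <= C -> (forall x, nsq (f x) <= C * nsq x) ->
  exists M, forall x, hnorm ip (f x) <= M * hnorm ip x.
Proof.
move=> C_ge0 f_bound; exists (Num.sqrt C) => x.
by rewrite !hnormE -sqrtrM // ler_sqrt ?f_bound // mulr_ge0 ?nsq_ge0.
Qed.

Definition symmetric_op (T : V -> V) := forall x y, ip (T x) y = ip x (T y).

Section SymmetricOperator.
Variable T : V -> V.
Hypotheses (T_lin : linear T) (T_sym : symmetric_op T).
HB.instance Definition _ := GRing.isLinear.Build R[i] V V *:%R T T_lin.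

Lemma reip_sym x y : reip (T x) y = reip x (T y).
Proof. by rewrite /reip T_sym. Qed.

Lemma reip_polar x y :
  reip (T (x + y)) (x + y) = reip (T x) x + 2 * reip (T x) y + reip (T y) y.
Proof. by rewrite linearD !reipDl !reipDr (reip_sym y x) (reipC y (T x)); ring. Qed.

Hypothesis T_ge0 : forall x, 0 <= reip (T x) x.

Lemma cauchy_schwarz_op x y : reip (T x) y ^+ 2 <= reip (T x) x * reip (T y) y.
Proof.
apply: (@cauchy_schwarz_form R V (fun u v => reip (T u) v)) => // [u v w|r u w|u v] /=.
- by rewrite linearD reipDl.
- by rewrite linearZ reipZl.
- by rewrite reip_sym reipC.
Qed.

Lemma nsq_le_form K : 0 <= K -> (forall x, reip (T x) x <= K * nsq x) ->
  forall x, nsq (T x) <= K * reip (T x) x.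
Proof.
move=> K_ge0 T_le x; have := cauchy_schwarz_op x (T x).
have := T_le (T x); have := nsq_ge0 (T x); have := T_ge0 x.
rewrite /nsq; set n := reip (T x) (T x); set q := reip (T x) x.
set m := reip (T (T x)) (T x) => q_ge0 n_ge0 m_le n2_le.
have n2_le' : n ^+ 2 <= K * q * n by nra.
have Kq_ge0 : 0 <= K * q by rewrite mulr_ge0.
nra.
Qed.

End SymmetricOperator.

Lemma symmetric_op_eq0 (T : V -> V) : linear T -> symmetric_op T ->
  (forall x, reip (T x) x = 0) -> forall x, T x = 0.
Proof.
move=> T_lin T_sym T_eq0 x.
have reipT_eq0 u v : reip (T u) v = 0.
  by have := reip_polar T_lin T_sym u v; rewrite !T_eq0; lra.
exact/nsq_eq0/reipT_eq0.
Qed.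

Lemma cauchy_schwarz x y : reip x y ^+ 2 <= nsq x * nsq y.
Proof. exact: (@cauchy_schwarz_op id) nsq_ge0 x y. Qed.

Lemma form_le_nsq (T : V -> V) M : 0 <= M -> (forall x, nsq (T x) <= M ^+ 2 * nsq x) ->
  forall x, reip (T x) x <= M * nsq x.
Proof.
move=> M_ge0 T_le x; have cs := cauchy_schwarz (T x) x.
have sq_le : reip (T x) x ^+ 2 <= (M * nsq x) ^+ 2.
  by apply: le_trans cs _; rewrite exprMn expr2 mulrA ler_wpM2r ?nsq_ge0 ?T_le.
have := mulr_ge0 M_ge0 (nsq_ge0 x); nra.
Qed.

End InnerProduct.

Section BoundedInverse.
Variables (R : realType) (V : lmodType R[i]) (ip : V -> V -> R[i]).
Variables (D : V -> Prop) (A S : V -> V).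
Hypothesis S_inv : bounded_inverse ip D A S.

Lemma inverse_dom y : D (S y).
Proof. by case: S_inv => inv _ _; case: (inv y). Qed.

Lemma inverse_right y : A (S y) = y.
Proof. by case: S_inv => inv _ _; case: (inv y). Qed.

Lemma inverse_left x : D x -> S (A x) = x.
Proof. by case: S_inv => _ inv _; apply: inv. Qed.

Lemma inverse_linear : is_lin_op D A -> linear S.
Proof.
move=> [_ A_lin] a x y; have [D_xy A_xy] := A_lin a _ _ (inverse_dom x) (inverse_dom y).
by rewrite -[in LHS](inverse_right x) -[in LHS](inverse_right y) -A_xy inverse_left.
Qed.

Lemma inverse_symmetric : (forall x y, D x -> D y -> ip (A x) y = ip x (A y)) ->
  symmetric_op ip S.
Proof.
move=> A_sym x y; have := A_sym _ _ (inverse_dom x) (inverse_dom y).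
by rewrite !inverse_right.
Qed.

End BoundedInverse.

Lemma eq_bounded_inverse (R : realType) (V : lmodType R[i]) (ip : V -> V -> R[i])
    (D : V -> Prop) (T T' S : V -> V) :
  (forall x, T x = T' x) -> bounded_inverse ip D T S -> bounded_inverse ip D T' S.
Proof.
move=> eqT [inv_r inv_l S_bound]; split=> // [y|x Dx]; last by rewrite -eqT inv_l.
by have [DSy TSy] := inv_r y; rewrite -eqT.
Qed.

Section Perturbation.
Variables (R : realType) (V : lmodType R[i]) (ip : V -> V -> R[i]).
Hypothesis ip_inner : is_inner_product ip.
Variables (D : V -> Prop) (A S B : V -> V) (MA MB : R).
Hypotheses (A_lin : is_lin_op D A) (S_inv : bounded_inverse ip D A S).
Hypothesis S_bound : forall y, nsq ip (S y) <= MA ^+ 2 * nsq ip y.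
Hypotheses (B_lin : linear B) (B_bound : forall x, nsq ip (B x) <= MB ^+ 2 * nsq ip x).

HB.instance Definition _ := GRing.isLinear.Build R[i] V V *:%R S (inverse_linear S_inv A_lin).
HB.instance Definition _ := GRing.isLinear.Build R[i] V V *:%R B B_lin.

Lemma resolvent_perturbation (z : R[i]) : (forall x, B (S (B x)) = 0) ->
  bounded_inverse ip D (fun x => A x + z *: B x) (fun y => S y - z *: S (B (S y))).
Proof.
move=> BSB0; split.
- move=> y; rewrite -linearZ -linearB; split; first exact: inverse_dom S_inv _.
  by rewrite (inverse_right S_inv) !linearB !linearZ /= BSB0 oppr0 !scaler0 addr0 scalerN subrK.
- move=> x Dx; rewrite !linearD !linearZ /= (inverse_left S_inv) // BSB0.
  by rewrite linear0 oppr0 !scaler0 addr0 scalerN addrK.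
pose k := complex.Re z ^+ 2 + complex.Im z ^+ 2.
have k_ge0 : 0 <= k by rewrite addr_ge0 ?sqr_ge0.
apply: (hnorm_bounded ip_inner (C := 2 * MA ^+ 2 + 2 * k * (MA ^+ 2 * (MB ^+ 2 * MA ^+ 2)))).
  have := mulr_ge0 k_ge0 (mulr_ge0 (sqr_ge0 MA) (mulr_ge0 (sqr_ge0 MB) (sqr_ge0 MA))).
  by have := sqr_ge0 MA; lra.
move=> y; set n := nsq ip y.
have SBS_le : nsq ip (S (B (S y))) <= MA ^+ 2 * (MB ^+ 2 * (MA ^+ 2 * n)).
  apply: le_trans (S_bound _) _; rewrite ler_wpM2l ?sqr_ge0 //.
  by apply: le_trans (B_bound _) _; rewrite ler_wpM2l ?sqr_ge0 ?S_bound.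
apply: le_trans (nsqB ip_inner _ _) _; rewrite nsqZ // -/k.
have := S_bound y; have := ler_wpM2l k_ge0 SBS_le; rewrite -/n; nra.
Qed.

Hypothesis A_sym : forall x y, D x -> D y -> ip (A x) y = ip x (A y).
Hypotheses (B_sym : symmetric_op ip B) (B_ge0 : nonneg_op ip B).
Hypotheses (MA_ge0 : 0 <= MA) (MB_ge0 : 0 <= MB).

Let BSB x := B (S (B x)).
Let qB x := reip ip (B x) x.
Let qBSB x := reip ip (BSB x) x.

Lemma BSB_linear : linear BSB.
Proof. by move=> a x y; rewrite /BSB !linearP. Qed.

Lemma BSB_symmetric : symmetric_op ip BSB.
Proof.
by move=> x y; rewrite /BSB B_sym (inverse_symmetric S_inv A_sym) B_sym.
Qed.

Lemma qB_ge0 x : 0 <= qB x.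
Proof. exact/reip_ge0/B_ge0. Qed.

Lemma qBSBE x : qBSB x = reip ip (S (B x)) (B x).
Proof. by rewrite /qBSB /reip /BSB B_sym. Qed.

Lemma nsqB_le x : nsq ip (B x) <= MB * qB x.
Proof.
apply: (nsq_le_form ip_inner B_lin B_sym) => // [y|y]; first exact: qB_ge0.
exact: form_le_nsq.
Qed.

Lemma qBSB_le x : `|qBSB x| <= MA * MB * qB x.
Proof.
have nB_ge0 := nsq_ge0 ip_inner (B x).
have sq_le : qBSB x ^+ 2 <= (MA * MB * qB x) ^+ 2.
  rewrite qBSBE; apply: le_trans (cauchy_schwarz ip_inner _ _) _.
  apply: le_trans (ler_wpM2r nB_ge0 (S_bound (B x))) _.
  rewrite -[X in X <= _]mulrA -expr2 !exprMn -mulrA ler_wpM2l ?sqr_ge0 // -exprMn.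
  by rewrite ler_pXn2r ?nnegrE ?nsqB_le // mulr_ge0 ?qB_ge0.
rewrite -(@ler_pXn2r _ 2) ?nnegrE ?mulr_ge0 ?qB_ge0 //.
by rewrite real_normK ?num_real.
Qed.

Lemma qBSB_sqr_le (t : R) : zero_in_resolvent ip D (fun x => A x + t%:C *: B x) ->
  (forall x, 0 <= qB x + t * qBSB x) ->
  exists2 C, 0 <= C & forall x, qBSB x ^+ 2 <= C * (qB x + t * qBSB x) * qB x.
Proof.
move=> [St St_inv] qH_ge0; have [_ _ [N N_bound]] := St_inv.
pose H x := B x + t%:C *: BSB x.
have H_lin : linear H.
  by move=> a x y; rewrite /H BSB_linear linearP !scalerDr !scalerA mulrC addrACA.
have H_sym : symmetric_op ip H.
  move=> x y; rewrite /H (ipDl ip_inner) (ipZl ip_inner) (ipDr ip_inner).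
  by rewrite (ipZr_real ip_inner) B_sym BSB_symmetric.
have qHE x : reip ip (H x) x = qB x + t * qBSB x.
  by rewrite /H (reipDl ip_inner) (reipZl ip_inner).
have StH x : St (H x) = S (B x).
  rewrite -[RHS](inverse_left St_inv (inverse_dom S_inv (B x))) /=.
  by rewrite (inverse_right S_inv).
pose K := (1 + `|t| * (MA * MB)) * MB.
have K_ge0 : 0 <= K by rewrite mulr_ge0 // addr_ge0 // mulr_ge0 // mulr_ge0.
have qH_le x : reip ip (H x) x <= K * nsq ip x.
  rewrite qHE /K -mulrA.
  have qB_le := form_le_nsq ip_inner MB_ge0 B_bound x.
  have tq_le : t * qBSB x <= `|t| * (MA * MB * qB x).
    by rewrite (le_trans (ler_norm _)) // normrM ler_wpM2l ?qBSB_le.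
  have c_ge0 : 0 <= 1 + `|t| * (MA * MB) by rewrite addr_ge0 // !mulr_ge0.
  have := ler_wpM2l c_ge0 qB_le; lra.
have nsqH_le x : nsq ip (H x) <= K * (qB x + t * qBSB x).
  by rewrite -qHE; apply: (nsq_le_form ip_inner H_lin H_sym _ K_ge0 qH_le) => y; rewrite qHE.
exists (`|N| ^+ 2 * K * MB); first by rewrite mulr_ge0 // mulr_ge0 // sqr_ge0.
move=> x; rewrite qBSBE.
apply: le_trans (cauchy_schwarz ip_inner _ _) _.
have nsqSB_le : nsq ip (S (B x)) <= `|N| ^+ 2 * (K * (qB x + t * qBSB x)).
  rewrite -StH; apply: le_trans (nsq_bounded ip_inner N_bound _) _.
  by rewrite ler_wpM2l ?sqr_ge0.
rewrite -qBSBE.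
have -> : `|N| ^+ 2 * K * MB * (qB x + t * qBSB x) * qB x =
          `|N| ^+ 2 * (K * (qB x + t * qBSB x)) * (MB * qB x) by ring.
by rewrite ler_pM ?nsq_ge0 ?nsqB_le.
Qed.

Hypothesis real_resolvent :
  forall t : R, zero_in_resolvent ip D (fun x => A x + t%:C *: B x).

Lemma qBSB_ratio_gap (s M : R) : 0 < M -> (forall y, s * qBSB y <= M * qB y) ->
  exists2 K, 0 <= K & forall y, 0 < qB y ->
    (s * qBSB y / qB y) ^+ 2 <= K * (M - s * qBSB y / qB y).
Proof.
move=> M_gt0 sq_leM.
have qH_ge0 y : 0 <= qB y + - s / M * qBSB y.
  by rewrite mulrAC !mulNr subr_ge0 ler_pdivrMr // [_ * M]mulrC sq_leM.
have [C C_ge0 C_le] := qBSB_sqr_le (real_resolvent (- s / M)) qH_ge0.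
exists (s ^+ 2 * C / M); first by rewrite divr_ge0 ?(ltW M_gt0) // mulr_ge0 // sqr_ge0.
move=> y qBy_gt0.
have M_neq0 : M != 0 := lt0r_neq0 M_gt0.
have qBy_neq0 : qB y != 0 := lt0r_neq0 qBy_gt0.
have -> : s ^+ 2 * C / M * (M - s * qBSB y / qB y) =
          s ^+ 2 * (C * (qB y + - s / M * qBSB y) * qB y) / qB y ^+ 2.
  by field; apply/andP.
rewrite expr_div_n exprMn ler_pM2r ?invr_gt0 ?exprn_gt0 //.
by rewrite ler_wpM2l ?sqr_ge0.
Qed.

Lemma qBSB_sign (s : R) x0 : s * qBSB x0 <= 0.
Proof.
rewrite leNgt; apply/negP => sq_gt0.
have sq_le y : s * qBSB y <= `|s| * (MA * MB) * qB y.
  by rewrite -mulrA (le_trans (ler_norm _)) // normrM ler_wpM2l ?qBSB_le.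
have qB_gt0 : 0 < qB x0.
  rewrite lt_def qB_ge0 andbT; apply: contraTneq sq_gt0 => qB0.
  by rewrite -leNgt (le_trans (sq_le x0)) // qB0 mulr0.
pose E := [set r | exists2 y, 0 < qB y & r = s * qBSB y / qB y].
have supE : has_sup E.
  split; first by exists (s * qBSB x0 / qB x0), x0.
  by exists (`|s| * (MA * MB)) => r [y qBy_gt0 ->]; rewrite ler_pdivrMr.
set M := sup E.
have sq_leM y : s * qBSB y <= M * qB y.
  have [qBy_gt0|qBy_le0] := ltP 0 (qB y).
    by rewrite -ler_pdivrMr //; apply: sup_upper_bound supE _ _; exists y.
  have qBy0 : qB y = 0 by apply/le_anti; rewrite qBy_le0 qB_ge0.
  by have := sq_le y; rewrite qBy0 !mulr0.
have M_gt0 : 0 < M.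
  rewrite ltNge; apply/negP => M_le0; have := sq_leM x0.
  by have := mulr_le0_ge0 M_le0 (ltW qB_gt0); lra.
have [K K_ge0 gap] := qBSB_ratio_gap M_gt0 sq_leM.
have gapE r : E r -> r ^+ 2 <= K * (M - r) by move=> [y /gap gap_y ->].
by have := sup_le0_of_sqr_le_gap supE K_ge0 gapE; rewrite -/M; lra.
Qed.

Lemma BSB_eq0 x : B (S (B x)) = 0.
Proof.
apply: (symmetric_op_eq0 ip_inner BSB_linear BSB_symmetric) => y.
change (qBSB y = 0); have := qBSB_sign 1 y; have := qBSB_sign (-1) y; lra.
Qed.

End Perturbation.

Theorem proposition2p1 (R : realType) (V : lmodType R[i]) (ip : V -> V -> R[i])
    (D : V -> Prop) (A B : V -> V) :
  is_hilbert ip ->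
  self_adjoint ip D A ->
  self_adjoint ip (fun _ => True) B ->
  bounded_op ip B ->
  nonneg_op ip B ->
  ((forall t : R, zero_in_resolvent ip D (fun x => A x + t%:C *: B x)) <->
   (zero_in_resolvent ip D A /\
    forall Ainv : V -> V, bounded_inverse ip D A Ainv -> forall x : V, B (Ainv (B x)) = 0))
  /\
  (forall Ainv : V -> V, bounded_inverse ip D A Ainv ->
    (forall x : V, B (Ainv (B x)) = 0) ->
    forall z : R[i],
      bounded_inverse ip D (fun x => A x + z *: B x)
        (fun y => Ainv y - z *: Ainv (B (Ainv y)))).
Proof.
move=> [ip_inner _] [A_lin _ A_sym _] [_ _ B_sym _] [B_lin [MB B_bound]] B_ge0.
have B_nsq := nsq_bounded ip_inner B_bound.
have formula Ainv : bounded_inverse ip D A Ainv -> (forall x, B (Ainv (B x)) = 0) ->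
    forall z, bounded_inverse ip D (fun x => A x + z *: B x)
                (fun y => Ainv y - z *: Ainv (B (Ainv y))).
  move=> Ainv_inv BAB0 z; have [_ _ [MA Ainv_bound]] := Ainv_inv.
  exact: (resolvent_perturbation (B := B) ip_inner A_lin Ainv_inv
    (nsq_bounded ip_inner Ainv_bound) B_lin B_nsq z BAB0).
split; last exact: formula.
split=> [resolvent | [[Ainv Ainv_inv] BAB0] t].
- split=> [|Ainv Ainv_inv x].
    have [S S_inv] := resolvent 0; exists S; apply: eq_bounded_inverse S_inv => x.
    by rewrite rmorph0 scale0r addr0.
  have [_ _ [MA Ainv_bound]] := Ainv_inv.
  exact: (BSB_eq0 (B := B) ip_inner A_lin Ainv_inv (nsq_bounded ip_inner Ainv_bound)
    B_lin B_nsq A_sym (fun y z => B_sym y z I I) B_ge0 (normr_ge0 MA) (normr_ge0 MB)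
    resolvent x).
- by exists (fun y => Ainv y - t%:C *: Ainv (B (Ainv y))); apply: formula (BAB0 _ Ainv_inv) _.
Qed.
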